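(* Let $n\ge3$, $\mu_1,\mu_2,\beta>0$, $p=2q+1$ with $\frac{n}{n-2}<p<\frac{n+2}{n-2}$, let $(u,v)$ be a nonnegative radial solution of (S) and $\bar w_1,\bar w_2$ as in the context. Then $(\bar w_1,\bar w_2)$ solves $$\bar w_i''+\tau_0\bar w_i'-\sigma_0\bar w_i+\mu_i\bar w_i^{2q+1}+\beta\bar w_i^q\bar w_j^{q+1}=0\ \ (\{i,j\}=\{1,2\})\ \text{on }\mathbb{R},$$ the function $\bar\Psi(t)$ is nondecreasing and uniformly bounded on $\mathbb{R}$, and $$\frac{d}{dt}\bar\Psi(t)=-\tau_0\big[(\bar w_1')^2+(\bar w_2')^2\big](t).$$
   Context: System (S): $-\Delta u=\mu_1u^{2q+1}+\beta u^qv^{q+1}$, $-\Delta v=\mu_2v^{2q+1}+\beta v^qu^{q+1}$ in $\mathbb{R}^n\setminus\{0\}$; nonnegative solutions are $C^2(\mathbb{R}^n\setminus\{0\})$ pairs with $u,v\ge0$. $\bar u(x)=|x|^{2-n}u(x/|x|^2)$, $\bar v(x)=|x|^{2-n}v(x/|x|^2)$, $\alpha=p(n-2)-(n+2)$, $\delta_0=\frac{2+\alpha}{p-1}$, $\bar w_1(t)=e^{-\delta_0t}\bar u(e^{-t})$, $\bar w_2(t)=e^{-\delta_0t}\bar v(e^{-t})$, $\tau_0=\frac{n-2}{p-1}\big(\frac{n+2+2\alpha}{n-2}-p\big)<0$, $\sigma_0=\frac{(2+\alpha)(n-2)}{(p-1)^2}\big(p-\frac{n+\alpha}{n-2}\big)>0$,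 and $$\bar\Psi(t)=\tfrac12\big(|\bar w_1'|^2+|\bar w_2'|^2-\sigma_0(\bar w_1^2+\bar w_2^2)\big)+\tfrac1{p+1}\big(\mu_1\bar w_1^{p+1}+2\beta\bar w_1^{q+1}\bar w_2^{q+1}+\mu_2\bar w_2^{p+1}\big).$$ *)

From Stdlib Require Import Reals Lra.
Open Scope R_scope.

(* Points of R^n are represented as maps nat -> R whose coordinates k >= n vanish. *)
Definition pt := nat -> R.
Definition inRn (n : nat) (x : pt) : Prop := forall k, (n <= k)%nat -> x k = 0.

Fixpoint sumR (n : nat) (f : nat -> R) : R :=
  match n with O => 0 | S k => sumR k f + f k end.

Definition nrm (n : nat) (x : pt) : R := sqrt (sumR n (fun i => x i ^ 2)).

Definition shift (x : pt) (i : nat) (t : R) : pt :=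
  fun k => if Nat.eqb k i then x k + t else x k.

Definition partial_lim (f : pt -> R) (x : pt) (i : nat) (l : R) : Prop :=
  derivable_pt_lim (fun t => f (shift x i t)) 0 l.

Definition cont_Rn (n : nat) (f : pt -> R) (x : pt) : Prop :=
  forall eps, 0 < eps -> exists d, 0 < d /\
    forall y, inRn n y -> nrm n (fun k => y k - x k) < d -> Rabs (f y - f x) < eps.

Definition C2_punct (n : nat) (f : pt -> R) (D1 : nat -> pt -> R)
  (D2 : nat -> nat -> pt -> R) : Prop :=
  forall x, inRn n x -> 0 < nrm n x ->
    cont_Rn n f x /\
    forall i, (i < n)%nat ->
      partial_lim f x i (D1 i x) /\ cont_Rn n (D1 i) x /\
      forall j, (j < n)%nat ->
        partial_lim (D1 i) x j (D2 i j x) /\ cont_Rn n (D2 i j) x.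

(* real power of a nonnegative number, with 0^a = 0 (a > 0 in all uses) *)
Definition rpow (x a : R) : R := if Rle_dec x 0 then 0 else Rpower x a.

Definition sol_S (n : nat) (mu1 mu2 beta q : R) (u v : pt -> R) : Prop :=
  (forall x, inRn n x -> 0 < nrm n x -> 0 <= u x /\ 0 <= v x) /\
  exists D1u D2u D1v D2v,
    C2_punct n u D1u D2u /\ C2_punct n v D1v D2v /\
    forall x, inRn n x -> 0 < nrm n x ->
      - sumR n (fun i => D2u i i x)
        = mu1 * rpow (u x) (2 * q + 1) + beta * rpow (u x) q * rpow (v x) (q + 1) /\
      - sumR n (fun i => D2v i i x)
        = mu2 * rpow (v x) (2 * q + 1) + beta * rpow (v x) q * rpow (u x) (q + 1).

Definition radial (n : nat) (f : pt -> R) : Prop :=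
  forall x y, inRn n x -> inRn n y -> 0 < nrm n x -> nrm n x = nrm n y -> f x = f y.

Definition kelvin (n : nat) (f : pt -> R) (x : pt) : R :=
  Rpower (nrm n x) (2 - INR n) * f (fun k => x k / (nrm n x) ^ 2).

Definition radpt (r : R) : pt := fun k => if Nat.eqb k 0 then r else 0.

Definition alpha0 (n : nat) (p : R) : R := p * (INR n - 2) - (INR n + 2).
Definition delta0 (n : nat) (p : R) : R := (2 + alpha0 n p) / (p - 1).
Definition tau0 (n : nat) (p : R) : R :=
  (INR n - 2) / (p - 1) * ((INR n + 2 + 2 * alpha0 n p) / (INR n - 2) - p).
Definition sigma0 (n : nat) (p : R) : R :=
  (2 + alpha0 n p) * (INR n - 2) / (p - 1) ^ 2 * (p - (INR n + alpha0 n p) / (INR n - 2)).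

Definition wbar (n : nat) (p : R) (f : pt -> R) (t : R) : R :=
  exp (- delta0 n p * t) * kelvin n f (radpt (exp (- t))).

Definition Psibar (n : nat) (mu1 mu2 beta q : R) (w1 w2 dw1 dw2 : R -> R) (t : R) : R :=
  let p := 2 * q + 1 in
  / 2 * (dw1 t ^ 2 + dw2 t ^ 2 - sigma0 n p * (w1 t ^ 2 + w2 t ^ 2))
  + / (p + 1) * (mu1 * rpow (w1 t) (p + 1)
                 + 2 * beta * rpow (w1 t) (q + 1) * rpow (w2 t) (q + 1)
                 + mu2 * rpow (w2 t) (p + 1)).

From Stdlib Require Import Reals Lra Lia FunctionalExtensionality.
Open Scope R_scope.

(* 1. Radial calculus: the profile phi(r) = u(r e_1) of a radial C^2 function has
      Laplacian phi'' + (n-1) phi'/r (tangential second derivatives equal phi'/r).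
   2. A priori estimates for a nonnegative radial supersolution
      phi'' + (n-1)/r phi' = -F <= -mu phi^p: the flux r^(n-1) phi' is nonincreasing
      and nonpositive, (n-2) phi + r phi' >= 0, and r^2 phi^p <= C phi.
   3. In the variable t = ln r, the Emden-Fowler transform W(t) = e^(2t/(p-1)) phi(e^t),
      which is the function bar w of the statement, solves
      W'' + tau0 W' - sigma0 W + (nonlinearity) = 0; the estimates of step 2 make W and
      W' bounded.
   4. Differentiating Psi along the system, the sigma0-terms and the nonlinear terms
      cancel, leaving Psi' = -tau0 (w1'^2 + w2'^2) >= 0 since tau0 < 0 for
      subcritical p. Boundedness of Psi follows from that of w_i and w_i'. *)

Lemma derivable_pt_lim_eq f x l l' :
  derivable_pt_lim f x l -> l = l' -> derivable_pt_lim f x l'.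
Proof. now intros H <-. Qed.

Lemma derivable_pt_lim_cmul c f x l :
  derivable_pt_lim f x l -> derivable_pt_lim (fun y => c * f y) x (c * l).
Proof. exact (derivable_pt_lim_scal f c x l). Qed.

Lemma derivable_pt_lim_sq f x l :
  derivable_pt_lim f x l -> derivable_pt_lim (fun y => f y ^ 2) x (2 * f x * l).
Proof.
  intros H. apply derivable_pt_lim_ext with (f := fun y => f y * f y); [intros; ring|].
  eapply derivable_pt_lim_eq; [apply derivable_pt_lim_mult; eauto | ring].
Qed.

(* A derivative at 0 of the translate t |-> f (r + t) is a derivative of f at r;
   this turns partial derivatives (derivatives along x + t e_i at t = 0) into
   ordinary ones. *)
Lemma derivable_pt_lim_translate f r l :
  derivable_pt_lim (fun t => f (r + t)) 0 l -> derivable_pt_lim f r l.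
Proof.
  intros H eps Heps. destruct (H eps Heps) as [d Hd]. exists d. intros h Hh0 Hhd.
  specialize (Hd h Hh0 Hhd). now rewrite Rplus_0_l, Rplus_0_r in Hd.
Qed.

Lemma derivable_pt_lim_exp_lin a t :
  derivable_pt_lim (fun t => exp (a * t)) t (a * exp (a * t)).
Proof.
  eapply derivable_pt_lim_eq.
  - apply (derivable_pt_lim_comp (fun t => a * t) exp).
    + apply derivable_pt_lim_cmul, derivable_pt_lim_id.
    + apply derivable_pt_lim_exp.
  - ring.
Qed.

Lemma nondecreasing_of_deriv f f' a b : a <= b ->
  (forall c, a <= c <= b -> derivable_pt_lim f c (f' c)) ->
  (forall c, a <= c <= b -> 0 <= f' c) -> f a <= f b.
Proof.
  intros Hab Hd Hs. destruct (Req_dec a b) as [->|Hne]; [lra|].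
  destruct (MVT_cor2 f f' a b ltac:(lra) Hd) as [c [Hc1 Hc2]].
  assert (0 <= f' c) by (apply Hs; lra). nra.
Qed.

Lemma nonincreasing_of_deriv f f' a b : a <= b ->
  (forall c, a <= c <= b -> derivable_pt_lim f c (f' c)) ->
  (forall c, a <= c <= b -> f' c <= 0) -> f b <= f a.
Proof.
  intros Hab Hd Hs.
  enough (- f a <= - f b) by lra.
  apply (nondecreasing_of_deriv (fun y => - f y) (fun y => - f' y)); auto.
  - intros c Hc. apply derivable_pt_lim_opp, Hd, Hc.
  - intros c Hc. specialize (Hs c Hc). lra.
Qed.

Lemma rpow_pos x a : 0 < x -> rpow x a = Rpower x a.
Proof. intros; unfold rpow; destruct (Rle_dec x 0); [lra|auto]. Qed.

Lemma rpow_npos x a : x <= 0 -> rpow x a = 0.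
Proof. intros; unfold rpow; destruct (Rle_dec x 0); [auto|lra]. Qed.

Lemma rpow_ge0 x a : 0 <= rpow x a.
Proof. unfold rpow; destruct (Rle_dec x 0); [lra|left; apply exp_pos]. Qed.

Lemma rpow_le_compat x y a : 0 < a -> 0 <= x <= y -> rpow x a <= rpow y a.
Proof.
  intros Ha [H1 H2]. destruct (Rle_dec x 0).
  - rewrite (rpow_npos x) by auto. apply rpow_ge0.
  - rewrite !rpow_pos by lra. apply Rle_Rpower_l; lra.
Qed.

Lemma rpow_exp_mul y x c : rpow (exp y * x) c = exp (c * y) * rpow x c.
Proof.
  pose proof (exp_pos y) as Hy. destruct (Rle_dec x 0) as [H|H].
  - rewrite !rpow_npos; [ring|lra|nra].
  - rewrite !rpow_pos by nra. unfold Rpower.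
    rewrite ln_mult, ln_exp, <- exp_plus by (nra || apply exp_pos). f_equal; ring.
Qed.

Lemma derivable_pt_lim_rpow c x : 1 < c ->
  derivable_pt_lim (fun y => rpow y c) x (c * rpow x (c - 1)).
Proof.
  intros Hc. destruct (Rtotal_order x 0) as [Hx|[->|Hx]].
  - apply derivable_pt_lim_locally_ext with (f := fun _ => 0) (a := x - 1) (b := 0);
      [lra| intros; rewrite rpow_npos; lra |].
    rewrite rpow_npos, Rmult_0_r by lra. apply derivable_pt_lim_const.
  - intros eps He.
    assert (P : 0 < Rpower eps (/ (c - 1))) by apply exp_pos.
    exists (mkposreal _ P). simpl. intros h H1 H2.
    rewrite (rpow_npos 0 c), (rpow_npos 0 (c - 1)), Rplus_0_l, Rmult_0_r by lra.
    destruct (Rle_dec h 0) as [Hh|Hh].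
    + rewrite rpow_npos by lra. replace ((0 - 0) / h - 0) with 0 by (field; lra). rewrite Rabs_R0. lra.
    + rewrite rpow_pos by lra.
      replace ((Rpower h c - 0) / h - 0) with (Rpower h (c - 1)).
      2:{ replace c with ((c - 1) + 1) at 2 by ring.
          rewrite Rpower_plus, Rpower_1 by lra. field. lra. }
      rewrite Rabs_right by (left; apply exp_pos). rewrite Rabs_right in H2 by lra.
      replace eps with (Rpower (Rpower eps (/ (c - 1))) (c - 1)).
      2:{ rewrite Rpower_mult. replace (/ (c - 1) * (c - 1)) with 1 by (field; lra).
          apply Rpower_1; lra. }
      apply Rlt_Rpower_l; lra.
  - apply derivable_pt_lim_locally_ext with (f := fun y => Rpower y c) (a := 0) (b := x + 1);
      [lra| intros; rewrite rpow_pos; lra |].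
    rewrite rpow_pos by lra. now apply derivable_pt_lim_power.
Qed.

Lemma derivable_pt_lim_rpow_comp w t d c : 1 < c -> derivable_pt_lim w t d ->
  derivable_pt_lim (fun t => rpow (w t) c) t (c * rpow (w t) (c - 1) * d).
Proof.
  intros Hc H. eapply derivable_pt_lim_eq.
  - apply (derivable_pt_lim_comp w (fun y => rpow y c)); [exact H|].
    now apply derivable_pt_lim_rpow.
  - ring.
Qed.

Lemma rpow_sublinear_bound w p C : 1 < p -> 0 < C -> 0 <= w ->
  rpow w p <= C * w -> w <= Rpower C (/ (p - 1)).
Proof.
  intros Hp HC Hw H. assert (HB : 0 < Rpower C (/ (p - 1))) by apply exp_pos.
  destruct (Req_dec w 0) as [->|Hne]; [lra|].
  assert (Hw' : 0 < w) by lra. rewrite rpow_pos in H by auto.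
  replace p with ((p - 1) + 1) in H by ring. rewrite Rpower_plus, Rpower_1 in H by auto.
  assert (Hle : Rpower w (p - 1) <= C) by (apply Rmult_le_reg_r with w; lra).
  apply Rnot_lt_le; intro Hlt.
  assert (Hlt' : Rpower (Rpower C (/ (p - 1))) (p - 1) < Rpower w (p - 1))
    by (apply Rlt_Rpower_l; lra).
  rewrite Rpower_mult in Hlt'. replace (/ (p - 1) * (p - 1)) with 1 in Hlt' by (field; lra).
  rewrite Rpower_1 in Hlt' by auto. lra.
Qed.

Lemma radpt_in n r : (1 <= n)%nat -> inRn n (radpt r).
Proof. intros Hn k Hk. unfold radpt. destruct (Nat.eqb_spec k 0); [lia|auto]. Qed.

Lemma shift_in n x i t : inRn n x -> (i < n)%nat -> inRn n (shift x i t).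
Proof. intros Hx Hi k Hk. unfold shift. destruct (Nat.eqb_spec k i); [lia|auto]. Qed.

Lemma shift_radpt_radial r t : shift (radpt r) 0 t = radpt (r + t).
Proof.
  apply functional_extensionality; intro k. unfold shift, radpt.
  destruct (Nat.eqb k 0); ring.
Qed.

Lemma shift_shift x i s t : shift (shift x i s) i t = shift x i (s + t).
Proof.
  apply functional_extensionality; intro k. unfold shift.
  destruct (Nat.eqb k i); ring.
Qed.

Lemma sumsq_shift_radpt r i s : (1 <= i)%nat -> forall m,
  sumR m (fun k => shift (radpt r) i s k ^ 2) =
  (if Nat.ltb 0 m then r ^ 2 else 0) + (if Nat.ltb i m then s ^ 2 else 0).
Proof.
  intros Hi m. induction m as [|m IH]; [simpl; ring|].
  change (sumR (S m) ?F) with (sumR m F + F m). rewrite IH. unfold shift, radpt.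
  destruct (Nat.eqb_spec m i), (Nat.eqb_spec m 0), (Nat.ltb_spec 0 m), (Nat.ltb_spec 0 (S m)),
    (Nat.ltb_spec i m), (Nat.ltb_spec i (S m)); try lia; ring.
Qed.

Lemma nrm_shift_radpt n r i s : (1 <= i)%nat -> (i < n)%nat ->
  nrm n (shift (radpt r) i s) = sqrt (r ^ 2 + s ^ 2).
Proof.
  intros H1 H2. unfold nrm. rewrite sumsq_shift_radpt by auto.
  destruct (Nat.ltb_spec 0 n), (Nat.ltb_spec i n); try lia; reflexivity.
Qed.

Lemma nrm_radpt n r : (2 <= n)%nat -> 0 <= r -> nrm n (radpt r) = r.
Proof.
  intros Hn Hr.
  replace (radpt r) with (shift (radpt r) 1 0)
    by (apply functional_extensionality; intro k; unfold shift; destruct (Nat.eqb k 1); ring).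
  rewrite nrm_shift_radpt by lia. replace (r ^ 2 + 0 ^ 2) with (r ^ 2) by ring.
  now apply sqrt_pow2.
Qed.

Lemma radpt_admissible n r : (2 <= n)%nat -> 0 < r -> inRn n (radpt r) /\ 0 < nrm n (radpt r).
Proof. intros Hn Hr. split; [apply radpt_in; lia | rewrite nrm_radpt by (auto; lra); lra]. Qed.

Definition profile (f : pt -> R) (r : R) : R := f (radpt r).

(* For a radial C^2 function on R^n \ {0}, the radial derivatives of the profile are
   the partials along e_1, every tangential second derivative D_ii (i >= 1) at r e_1
   equals phi'(r)/r, hence the Laplacian is phi'' + (n-1) phi'/r. *)
Section RadialProfile.
Variables (n : nat) (u : pt -> R) (D1 : nat -> pt -> R) (D2 : nat -> nat -> pt -> R).
Hypothesis Hn : (2 <= n)%nat.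
Hypothesis HC2 : C2_punct n u D1 D2.
Hypothesis Hrad : radial n u.

Let phi1 := profile (D1 0%nat).
Let phi2 := profile (D2 0%nat 0%nat).

Lemma profile_derivatives r : 0 < r ->
  derivable_pt_lim (profile u) r (phi1 r) /\ derivable_pt_lim phi1 r (phi2 r).
Proof.
  intros Hr. destruct (radpt_admissible n r Hn Hr) as [Hin Hpos].
  destruct (HC2 _ Hin Hpos) as [_ HC2x].
  destruct (HC2x 0%nat ltac:(lia)) as [Hp [_ Hj]]. destruct (Hj 0%nat ltac:(lia)) as [Hp2 _].
  unfold partial_lim in Hp, Hp2.
  split; apply derivable_pt_lim_translate;
    [eapply derivable_pt_lim_ext; [|exact Hp] | eapply derivable_pt_lim_ext; [|exact Hp2]];
    intro t; unfold profile, phi1; now rewrite shift_radpt_radial.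
Qed.

Section Tangential.
Variables (r : R) (i : nat).
Hypotheses (Hr : 0 < r) (Hi1 : (1 <= i)%nat) (Hin : (i < n)%nat).

Let rho s := sqrt (r ^ 2 + s ^ 2).

Let rho_pos s : 0 < rho s.
Proof. apply sqrt_lt_R0. nra. Qed.

Let rho_deriv s : derivable_pt_lim rho s (s / rho s).
Proof.
  eapply derivable_pt_lim_eq.
  - apply (derivable_pt_lim_comp (fun t => r ^ 2 + t ^ 2) sqrt).
    + apply derivable_pt_lim_plus; [apply derivable_pt_lim_const|].
      apply derivable_pt_lim_sq, derivable_pt_lim_id.
    + apply derivable_pt_lim_sqrt. nra.
  - pose proof (rho_pos s) as Hpos. unfold rho in *. field. lra.
Qed.

Let shift_admissible s : inRn n (shift (radpt r) i s) /\ 0 < nrm n (shift (radpt r) i s).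
Proof.
  split; [apply shift_in; [apply radpt_in|]; lia|].
  rewrite nrm_shift_radpt by lia. apply rho_pos.
Qed.

Lemma tangential_first_derivative s :
  D1 i (shift (radpt r) i s) = phi1 (rho s) * (s / rho s).
Proof.
  destruct (shift_admissible s) as [Hsin Hspos].
  destruct (HC2 _ Hsin Hspos) as [_ HC2x]. destruct (HC2x i Hin) as [Hp _].
  apply (uniqueness_limite _ _ _ _ Hp).
  apply derivable_pt_lim_ext with (f := fun t => profile u (rho (s + t))).
  { intro t. rewrite shift_shift. symmetry. apply Hrad.
    - apply shift_in; [apply radpt_in|]; lia.
    - apply radpt_in; lia.
    - rewrite nrm_shift_radpt by lia. apply rho_pos.
    - rewrite nrm_shift_radpt, nrm_radpt by (lia || left; apply rho_pos). reflexivity. }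
  apply (derivable_pt_lim_comp (fun t => rho (s + t)) (profile u)).
  - eapply derivable_pt_lim_eq.
    + apply (derivable_pt_lim_comp (fun t => s + t) rho); [|apply rho_deriv].
      apply derivable_pt_lim_plus; [apply derivable_pt_lim_const | apply derivable_pt_lim_id].
    + rewrite Rplus_0_r. ring.
  - rewrite Rplus_0_r. apply (profile_derivatives _ (rho_pos s)).
Qed.

(* Differentiating the previous formula at s = 0, where rho'(0) = 0. *)
Lemma tangential_second_derivative : D2 i i (radpt r) = phi1 r / r.
Proof.
  destruct (radpt_admissible n r Hn Hr) as [Hrin Hrpos].
  destruct (HC2 _ Hrin Hrpos) as [_ HC2x]. destruct (HC2x i Hin) as [_ [_ Hj]].
  destruct (Hj i Hin) as [Hp2 _]. unfold partial_lim in Hp2.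
  apply (uniqueness_limite _ _ _ _ Hp2).
  apply derivable_pt_lim_ext with (f := fun t => phi1 (rho t) * (t / rho t));
    [intro t; now rewrite tangential_first_derivative|].
  assert (Hrho0 : rho 0 = r).
  { unfold rho. replace (r ^ 2 + 0 ^ 2) with (r ^ 2) by ring. now apply sqrt_pow2, Rlt_le. }
  assert (Hd0 : derivable_pt_lim rho 0 0).
  { eapply derivable_pt_lim_eq; [apply rho_deriv | unfold Rdiv; ring]. }
  eapply derivable_pt_lim_eq.
  - apply derivable_pt_lim_mult.
    + apply (derivable_pt_lim_comp rho phi1); [exact Hd0|].
      rewrite Hrho0. apply (profile_derivatives _ Hr).
    + apply derivable_pt_lim_div; [apply derivable_pt_lim_id | exact Hd0 |].
      rewrite Hrho0; lra.
  - rewrite !Hrho0. unfold Rsqr. field. lra.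
Qed.

End Tangential.

Lemma radial_laplacian r : 0 < r ->
  sumR n (fun i => D2 i i (radpt r)) = phi2 r + (INR n - 1) * (phi1 r / r).
Proof.
  intros Hr.
  assert (Hsum : forall m, (1 <= m <= n)%nat ->
    sumR m (fun i => D2 i i (radpt r)) = phi2 r + INR (m - 1) * (phi1 r / r)).
  { intros m Hm. induction m as [|m IH]; [lia|].
    change (sumR (S m) ?F) with (sumR m F + F m).
    destruct (Nat.eq_dec m 0) as [->|Hm0]; [simpl; unfold phi2, profile; ring|].
    rewrite IH, tangential_second_derivative by (lia || lra).
    replace (S m - 1)%nat with (S (m - 1)) by lia. rewrite S_INR. ring. }
  rewrite Hsum by lia. rewrite minus_INR by lia. reflexivity.
Qed.

End RadialProfile.

Lemma nonneg_of_vanishing_lower_bounds x c S0 : 0 < S0 -> 0 <= c ->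
  (forall S, S0 <= S -> - c / S <= x) -> 0 <= x.
Proof.
  intros HS0 Hc H. apply Rnot_lt_le. intro Hx.
  set (S := S0 + 2 * c / (- x)).
  assert (Hq : 0 <= 2 * c / (- x)) by (apply Rmult_le_pos; [lra | left; apply Rinv_0_lt_compat; lra]).
  assert (HS : - c / S <= x) by (apply H; unfold S; lra).
  assert (Hmul : - c <= x * S).
  { apply Rmult_le_compat_r with (r := S) in HS; [|unfold S; lra].
    unfold Rdiv in HS. now rewrite Rmult_assoc, Rinv_l, Rmult_1_r in HS by (unfold S; lra). }
  assert (HxS : x * S = x * S0 - 2 * c) by (unfold S; field; lra).
  nra.
Qed.

Lemma unbounded_near_zero c A s0 : 0 < c -> 0 < s0 ->
  ~ (forall s, 0 < s <= s0 -> c / s <= A).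
Proof.
  intros Hc Hs0 H.
  set (B := Rabs A + 1).
  assert (HB : A < B) by (unfold B; pose proof (Rle_abs A); lra).
  assert (HB0 : 0 < B) by (unfold B; pose proof (Rabs_pos A); lra).
  set (s := Rmin s0 (c / B)).
  assert (Hs : 0 < s) by (apply Rmin_pos; [lra | apply Rdiv_lt_0_compat; lra]).
  assert (HsB : s * B <= c).
  { pose proof (Rmin_r s0 (c / B)). apply Rmult_le_compat_r with (r := B) in H0; [|lra].
    unfold Rdiv in H0. rewrite Rmult_assoc, Rinv_l, Rmult_1_r in H0 by lra. exact H0. }
  assert (Hle : c / s <= A) by (apply H; split; [lra | apply Rmin_l]).
  apply Rmult_le_compat_r with (r := s) in Hle; [|lra].
  unfold Rdiv in Hle. rewrite Rmult_assoc, Rinv_l, Rmult_1_r in Hle by lra. nra.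
Qed.

(* A priori estimates for a nonnegative radial supersolution of the Lane-Emden
   inequality in dimension N = k + 3 on R^N \ {0}:
       phi'' + (N-1)/r phi' = -F,   F >= mu phi^p >= 0.
   The flux r^(N-1) phi' is nonincreasing; comparing phi with the fundamental
   solution L(s) = s^(2-N)/(N-2) near 0 and near infinity shows that the flux is
   nonpositive and that (N-2) phi + r phi' >= 0; integrating once more on
   [r/2, r] then gives the decay estimate r^2 mu phi(r)^p <= C phi(r). *)
Section RadialSupersolution.
Variables (k : nat) (mu p : R) (phi phi1 phi2 F : R -> R).
Hypotheses (Hmu : 0 < mu) (Hp : 0 < p).
Hypothesis Hode : forall r, 0 < r ->
  derivable_pt_lim phi r (phi1 r) /\ derivable_pt_lim phi1 r (phi2 r) /\ 0 <= phi r /\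
  phi2 r + (INR (S k) + 1) * (phi1 r / r) = - F r /\ mu * rpow (phi r) p <= F r.

(* m = N - 2 *)
Let m := INR (S k).
Let m_pos : 0 < m.
Proof. apply lt_0_INR; lia. Qed.

Let flux r := r ^ S (S k) * phi1 r.
Let fundamental s := / (m * s ^ S k).

Let phi_nonneg r : 0 < r -> 0 <= phi r.
Proof. intros Hr. apply (Hode r Hr). Qed.

Let forcing_nonneg r : 0 < r -> 0 <= F r.
Proof.
  intros Hr. destruct (Hode r Hr) as [_ [_ [_ [_ HF]]]].
  pose proof (rpow_ge0 (phi r) p). nra.
Qed.

Lemma flux_deriv r : 0 < r -> derivable_pt_lim flux r (- (r ^ S (S k) * F r)).
Proof.
  intros Hr. destruct (Hode r Hr) as [_ [H2 [_ [H4 _]]]]. unfold flux.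
  eapply derivable_pt_lim_eq; [apply derivable_pt_lim_mult; [apply derivable_pt_lim_pow | exact H2]|].
  replace (F r) with (- (phi2 r + (m + 1) * (phi1 r / r))) by (unfold m; lra).
  unfold m. rewrite !S_INR. simpl. field. lra.
Qed.

(* -F <= 0, so the flux is nonincreasing. *)
Lemma flux_nonincreasing a b : 0 < a -> a <= b -> flux b <= flux a.
Proof.
  intros Ha Hab. apply (nonincreasing_of_deriv flux (fun r => - (r ^ S (S k) * F r))); auto.
  - intros c Hc. apply flux_deriv. lra.
  - intros c Hc. pose proof (forcing_nonneg c ltac:(lra)).
    assert (0 < c ^ S (S k)) by (apply pow_lt; lra). nra.
Qed.

Lemma comparison_deriv c s : 0 < s ->
  derivable_pt_lim (fun s => phi s + c * fundamental s) s ((flux s - c) / s ^ S (S k)).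
Proof.
  intros Hs. assert (Hpk : 0 < s ^ k) by (apply pow_lt; lra).
  eapply derivable_pt_lim_eq.
  - apply derivable_pt_lim_plus; [apply (Hode s Hs)|].
    apply derivable_pt_lim_cmul.
    apply derivable_pt_lim_ext with (f := fun s => 1 / (m * s ^ S k)); [intro; unfold Rdiv, fundamental; ring|].
    apply derivable_pt_lim_div; [apply derivable_pt_lim_const | |].
    + apply derivable_pt_lim_cmul, derivable_pt_lim_pow.
    + apply Rgt_not_eq, Rmult_lt_0_compat; [apply m_pos | apply pow_lt; lra].
  - unfold flux, Rsqr. simpl pred. pose proof m_pos. change (s ^ S k) with (s * s ^ k). change (s ^ S (S k)) with (s * (s * s ^ k)). change (INR (S k)) with m. field. split; lra.
Qed.

(* If the flux were positive at r1, phi + flux(r1) L would be nondecreasing on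
   (0, r1], contradicting phi >= 0 and L(s) -> +oo as s -> 0. *)
Lemma flux_nonpos r : 0 < r -> flux r <= 0.
Proof.
  intros Hr. apply Rnot_lt_le. intro Hc. set (c := flux r) in Hc.
  apply (unbounded_near_zero (c / m) (phi r + c * fundamental r) (Rmin r 1));
    [apply Rdiv_lt_0_compat; [lra | apply m_pos] | apply Rmin_pos; lra |].
  intros s [Hs Hsr]. pose proof (Rmin_l r 1). pose proof (Rmin_r r 1).
  assert (Hcmp : phi s + c * fundamental s <= phi r + c * fundamental r).
  { apply (nondecreasing_of_deriv (fun y => phi y + c * fundamental y)
      (fun y => (flux y - c) / y ^ S (S k)) s r); [lra| |].
    - intros y Hy. apply comparison_deriv. lra.
    - intros y Hy. assert (c <= flux y) by (apply flux_nonincreasing; lra).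
      apply Rmult_le_pos; [lra | left; apply Rinv_0_lt_compat, pow_lt; lra]. }
  assert (HL : / (m * s) <= fundamental s).
  { unfold fundamental. assert (s ^ k <= 1) by (rewrite <- (pow1 k); apply pow_incr; lra).
    assert (0 < s ^ k) by (apply pow_lt; lra). pose proof m_pos.
    change (s ^ S k) with (s * s ^ k).
    assert (0 < s * s ^ k <= s) by (split; nra).
    apply Rinv_le_contravar; [apply Rmult_lt_0_compat | apply Rmult_le_compat_l]; lra. }
  pose proof (phi_nonneg s Hs).
  replace (c / m / s) with (c * / (m * s)) by (field; pose proof m_pos; lra).
  assert (c * / (m * s) <= c * fundamental s) by (apply Rmult_le_compat_l; lra). lra.
Qed.

Lemma phi_deriv_nonpos r : 0 < r -> phi1 r <= 0.
Proof.
  intros Hr. pose proof (flux_nonpos r Hr). assert (0 < r ^ S (S k)) by (apply pow_lt; lra).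
  unfold flux in *. nra.
Qed.

(* Comparison with phi + flux(r) L on [r, +oo), where L(s) -> 0, gives
   (N-2) phi(r) + r phi'(r) >= 0. *)
Lemma radial_lower_bound r : 0 < r -> 0 <= m * phi r + r * phi1 r.
Proof.
  intros Hr. set (c := flux r).
  assert (Hc : c <= 0) by apply (flux_nonpos r Hr).
  assert (Hfr : phi r + c * fundamental r = (m * phi r + r * phi1 r) / m).
  { assert (0 < r ^ k) by (apply pow_lt; lra). pose proof m_pos. unfold c, flux, fundamental.
    change (r ^ S (S k)) with (r * (r * r ^ k)). change (r ^ S k) with (r * r ^ k).
    field. repeat split; lra. }
  enough (0 <= phi r + c * fundamental r) as H.
  { rewrite Hfr in H. pose proof m_pos.
    apply Rmult_le_compat_r with (r := m) in H; [|lra]. unfold Rdiv in H.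
    rewrite Rmult_0_l, Rmult_assoc, Rinv_l, Rmult_1_r in H by lra. exact H. }
  apply (nonneg_of_vanishing_lower_bounds _ (- c / m) (Rmax r 1));
    [pose proof (Rmax_r r 1); lra | apply Rmult_le_pos; [lra | left; apply Rinv_0_lt_compat, m_pos]|].
  intros X HX. pose proof (Rmax_l r 1). pose proof (Rmax_r r 1).
  assert (Hcmp : phi X + c * fundamental X <= phi r + c * fundamental r).
  { apply (nonincreasing_of_deriv (fun y => phi y + c * fundamental y)
      (fun y => (flux y - c) / y ^ S (S k)) r X); [lra| |].
    - intros y Hy. apply comparison_deriv. lra.
    - intros y Hy. assert (flux y <= c) by (apply flux_nonincreasing; lra).
      assert (0 < / y ^ S (S k)) by (apply Rinv_0_lt_compat, pow_lt; lra).
      unfold Rdiv. nra. }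
  assert (HL : fundamental X <= / (m * X)).
  { unfold fundamental. assert (1 <= X ^ k) by (rewrite <- (pow1 k); apply pow_incr; lra).
    pose proof m_pos. change (X ^ S k) with (X * X ^ k).
    assert (X <= X * X ^ k) by nra.
    apply Rinv_le_contravar; [apply Rmult_lt_0_compat | apply Rmult_le_compat_l]; lra. }
  pose proof (phi_nonneg X ltac:(lra)).
  replace (- (- c / m) / X) with (c * / (m * X)) by (field; pose proof m_pos; lra).
  assert (c * / (m * X) <= c * fundamental X) by (apply Rmult_le_compat_neg_l; lra). lra.
Qed.

(* The mean value theorem for the flux on [r/2, r], combined with the monotonicity
   of phi and the lower bound on r phi', gives r^2 mu phi(r)^p <= C phi(r). *)
Lemma decay_estimate r : 0 < r ->
  r ^ 2 * (mu * rpow (phi r) p) <= m * 2 ^ (k + 3) * phi r.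
Proof.
  intros Hr.
  destruct (MVT_cor2 flux (fun r => - (r ^ S (S k) * F r)) (r / 2) r) as [xi [Hmvt [Hx1 Hx2]]];
    [lra | intros; apply flux_deriv; lra |].
  assert (Hphi : phi r <= phi xi).
  { apply (nonincreasing_of_deriv phi phi1 xi r); [lra| |].
    - intros c Hc; apply (Hode c ltac:(lra)).
    - intros c Hc; apply phi_deriv_nonpos; lra. }
  set (Y := mu * rpow (phi r) p).
  assert (HY : 0 <= Y) by (pose proof (rpow_ge0 (phi r) p); unfold Y; nra).
  assert (HYF : Y <= F xi).
  { destruct (Hode xi ltac:(lra)) as [_ [_ [_ [_ HF]]]].
    assert (rpow (phi r) p <= rpow (phi xi) p)
      by (apply rpow_le_compat; [lra | split; [apply phi_nonneg|]; lra]).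
    unfold Y. nra. }
  assert (Hpow : (r / 2) ^ S (S k) * Y <= xi ^ S (S k) * F xi).
  { apply Rmult_le_compat; auto; [apply pow_le; lra | apply pow_incr; lra]. }
  assert (Hhalf : flux (r / 2) <= 0) by (apply flux_nonpos; lra).
  assert (Hflux : - flux r <= r ^ S k * (m * phi r)).
  { pose proof (radial_lower_bound r Hr) as Hlow.
    assert (Hrk : 0 < r ^ S k) by (apply pow_lt; lra).
    replace (flux r) with (r ^ S k * (r * phi1 r)) by (unfold flux; simpl; ring).
    assert (Hneg : - (r * phi1 r) <= m * phi r) by lra.
    pose proof (Rmult_le_compat_l (r ^ S k) _ _ (Rlt_le _ _ Hrk) Hneg). lra. }
  assert (Hmain : (r / 2) ^ S (S k) * Y * (r / 2) <= r ^ S k * (m * phi r)) by nra.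
  assert (H2k : 0 < 2 ^ k) by (apply pow_lt; lra).
  assert (Hscale : (r / 2) ^ S (S k) * Y * (r / 2) = r ^ S k / 2 ^ (k + 3) * (r ^ 2 * Y)).
  { unfold Rdiv. rewrite Rpow_mult_distr, pow_inv.
    replace (k + 3)%nat with (S (S (S k))) by lia. simpl. field. lra. }
  assert (Hrk : 0 < r ^ S k / 2 ^ (k + 3)) by (apply Rdiv_lt_0_compat; apply pow_lt; lra).
  apply Rmult_le_reg_l with (r ^ S k / 2 ^ (k + 3)); [exact Hrk|].
  replace (r ^ S k / 2 ^ (k + 3) * (m * 2 ^ (k + 3) * phi r)) with (r ^ S k * (m * phi r))
    by (field; apply pow_nonzero; lra).
  lra.
Qed.

End RadialSupersolution.

Definition emden_fowler (a : R) (phi : R -> R) (t : R) : R := exp (a * t) * phi (exp t).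
Definition emden_fowler_d1 (a : R) (phi phi1 : R -> R) (t : R) : R :=
  exp (a * t) * (a * phi (exp t) + exp t * phi1 (exp t)).
Definition emden_fowler_d2 (a : R) (phi phi1 phi2 : R -> R) (t : R) : R :=
  exp (a * t) * (a ^ 2 * phi (exp t) + (2 * a + 1) * (exp t * phi1 (exp t))
                 + exp t * exp t * phi2 (exp t)).

Lemma emden_fowler_derivatives a phi phi1 phi2 :
  (forall r, 0 < r -> derivable_pt_lim phi r (phi1 r) /\ derivable_pt_lim phi1 r (phi2 r)) ->
  forall t, derivable_pt_lim (emden_fowler a phi) t (emden_fowler_d1 a phi phi1 t) /\
    derivable_pt_lim (emden_fowler_d1 a phi phi1) t (emden_fowler_d2 a phi phi1 phi2 t).
Proof.
  intros H t. destruct (H _ (exp_pos t)) as [H1 H2].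
  assert (Hphi : derivable_pt_lim (fun t => phi (exp t)) t (phi1 (exp t) * exp t))
    by (apply (derivable_pt_lim_comp exp phi); [apply derivable_pt_lim_exp | exact H1]).
  assert (Hphi1 : derivable_pt_lim (fun t => phi1 (exp t)) t (phi2 (exp t) * exp t))
    by (apply (derivable_pt_lim_comp exp phi1); [apply derivable_pt_lim_exp | exact H2]).
  split; eapply derivable_pt_lim_eq.
  - apply derivable_pt_lim_mult; [apply derivable_pt_lim_exp_lin | exact Hphi].
  - unfold emden_fowler_d1. ring.
  - apply derivable_pt_lim_mult; [apply derivable_pt_lim_exp_lin|].
    apply derivable_pt_lim_plus; [apply derivable_pt_lim_cmul, Hphi|].
    apply derivable_pt_lim_mult; [apply derivable_pt_lim_exp | exact Hphi1].
  - unfold emden_fowler_d2. ring.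
Qed.

(* The function bar w of the statement is the Emden-Fowler transform, with exponent
   a = 2/(p-1), of the radial profile: the Kelvin transform and the factor e^(-delta0 t)
   combine into e^(a t) phi(e^t). *)
Lemma wbar_emden_fowler n p f : (2 <= n)%nat -> 1 < p ->
  wbar n p f = emden_fowler (2 / (p - 1)) (profile f).
Proof.
  intros Hn Hp. apply functional_extensionality; intro t.
  unfold wbar, kelvin, emden_fowler, profile.
  rewrite nrm_radpt by (auto; left; apply exp_pos).
  replace (fun k => radpt (exp (- t)) k / exp (- t) ^ 2) with (radpt (exp t)).
  2:{ apply functional_extensionality; intro k. unfold radpt. rewrite exp_Ropp.
      pose proof (exp_pos t). destruct (Nat.eqb k 0); field; lra. }
  unfold Rpower. rewrite ln_exp, <- Rmult_assoc, <- exp_plus.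
  do 2 f_equal. unfold delta0, alpha0. field. lra.
Qed.

Lemma emden_fowler_equation n p phi phi1 phi2 F t : INR n <> 2 -> 1 < p ->
  phi2 (exp t) = - F (exp t) - (INR n - 1) * (phi1 (exp t) / exp t) ->
  let a := 2 / (p - 1) in
  emden_fowler_d2 a phi phi1 phi2 t + tau0 n p * emden_fowler_d1 a phi phi1 t
    - sigma0 n p * emden_fowler a phi t + exp (a * t) * exp t * exp t * F (exp t) = 0.
Proof.
  intros Hn Hp Heq a. pose proof (exp_pos t).
  unfold emden_fowler_d2, emden_fowler_d1, emden_fowler, tau0, sigma0, alpha0, a.
  rewrite Heq. field. repeat split; lra.
Qed.

(* Bounds on W and W' inherited from the a priori estimates on the profile: the decay
   estimate r^2 phi^p <= C phi says exactly W^p <= C W, and the two-sided bound on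
   r phi' controls W'. *)
Lemma emden_fowler_bounds p m C phi phi1 : 1 < p -> 0 < m -> 0 < C ->
  (forall r, 0 < r -> 0 <= phi r /\ phi1 r <= 0 /\ 0 <= m * phi r + r * phi1 r /\
     r ^ 2 * rpow (phi r) p <= C * phi r) ->
  let a := 2 / (p - 1) in let B := Rpower C (/ (p - 1)) in
  forall t, 0 <= emden_fowler a phi t <= B /\
    Rabs (emden_fowler_d1 a phi phi1 t) <= (a + m) * B.
Proof.
  intros Hp Hm HC H a B t.
  assert (Ha : 0 < a) by (apply Rdiv_lt_0_compat; lra).
  pose proof (exp_pos t) as Ht. pose proof (exp_pos (a * t)) as Hat.
  destruct (H _ Ht) as [H0 [H1 [H2 H3]]].
  assert (Hw0 : 0 <= emden_fowler a phi t) by (unfold emden_fowler; nra).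
  assert (HwB : emden_fowler a phi t <= B).
  { apply rpow_sublinear_bound; auto. unfold emden_fowler. rewrite rpow_exp_mul.
    replace (p * (a * t)) with (a * t + t + t) by (unfold a; field; lra).
    rewrite !exp_plus. simpl in H3. nra. }
  split; [lra|]. unfold emden_fowler in *. unfold emden_fowler_d1.
  set (E := exp (a * t)) in *. set (X := exp t * phi1 (exp t)).
  assert (HX : - (m * phi (exp t)) <= X <= 0) by (unfold X; split; nra).
  apply Rabs_le. split; nra.
Qed.

(* Homogeneity of the nonlinearity: with a (p - 1) = 2 and p = 2q+1, the forcing
   e^((a+2) t) F(e^t) is the same nonlinearity evaluated at the scaled values. *)
Lemma coupling_scaling q mu beta t x y : 0 < q ->
  let a := 2 / (2 * q + 1 - 1) in
  exp (a * t) * exp t * exp t * (mu * rpow x (2 * q + 1) + beta * rpow x q * rpow y (q + 1))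
  = mu * rpow (exp (a * t) * x) (2 * q + 1)
    + beta * rpow (exp (a * t) * x) q * rpow (exp (a * t) * y) (q + 1).
Proof.
  intros Hq a. rewrite !rpow_exp_mul.
  assert (Hp : exp ((2 * q + 1) * (a * t)) = exp (a * t) * exp t * exp t)
    by (rewrite <- !exp_plus; f_equal; unfold a; field; lra).
  assert (Hqq : exp (q * (a * t)) * exp ((q + 1) * (a * t)) = exp (a * t) * exp t * exp t)
    by (rewrite <- !exp_plus; f_equal; unfold a; field; lra).
  rewrite Hp. transitivity (mu * (exp (a * t) * exp t * exp t) * rpow x (2 * q + 1)
    + beta * (exp (q * (a * t)) * exp ((q + 1) * (a * t))) * rpow x q * rpow y (q + 1));
    [rewrite Hqq|]; ring.
Qed.

Lemma radial_component n mu p u D1 D2 F : (3 <= n)%nat -> 1 < p -> 0 < mu ->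
  C2_punct n u D1 D2 -> radial n u ->
  (forall x, inRn n x -> 0 < nrm n x -> 0 <= u x) ->
  (forall r, 0 < r ->
     - sumR n (fun i => D2 i i (radpt r)) = F r /\ mu * rpow (u (radpt r)) p <= F r) ->
  let a := 2 / (p - 1) in
  let W := emden_fowler a (profile u) in
  let dW := emden_fowler_d1 a (profile u) (profile (D1 0%nat)) in
  let ddW := emden_fowler_d2 a (profile u) (profile (D1 0%nat)) (profile (D2 0%nat 0%nat)) in
  (forall t, derivable_pt_lim W t (dW t) /\ derivable_pt_lim dW t (ddW t)) /\
  (forall t, ddW t + tau0 n p * dW t - sigma0 n p * W t + exp (a * t) * exp t * exp t * F (exp t) = 0) /\
  (exists B D, forall t, 0 <= W t <= B /\ Rabs (dW t) <= D).
Proof.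
  intros Hn Hp Hmu HC Hrad Hu HF a W dW ddW.
  destruct (Nat.le_exists_sub 3 n Hn) as [k [Hnk _]]. rewrite Nat.add_comm in Hnk.
  assert (HN : INR n = INR (S k) + 2) by (rewrite Hnk; simpl plus; rewrite !S_INR; ring).
  assert (Hm : 0 < INR (S k)) by (apply lt_0_INR; lia).
  assert (Hprof : forall r, 0 < r ->
    derivable_pt_lim (profile u) r (profile (D1 0%nat) r) /\
    derivable_pt_lim (profile (D1 0%nat)) r (profile (D2 0%nat 0%nat) r))
    by (intros r Hr; apply (profile_derivatives n u D1 D2); auto; lia).
  assert (Hradial : forall r, 0 < r ->
    profile (D2 0%nat 0%nat) r = - F r - (INR n - 1) * (profile (D1 0%nat) r / r)).
  { intros r Hr. destruct (HF r Hr) as [HF1 _].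
    rewrite <- HF1, (radial_laplacian n u D1 D2) by (auto; lia). ring. }
  assert (Hsuper : forall r, 0 < r ->
    derivable_pt_lim (profile u) r (profile (D1 0%nat) r) /\
    derivable_pt_lim (profile (D1 0%nat)) r (profile (D2 0%nat 0%nat) r) /\
    0 <= profile u r /\
    profile (D2 0%nat 0%nat) r + (INR (S k) + 1) * (profile (D1 0%nat) r / r) = - F r /\
    mu * rpow (profile u r) p <= F r).
  { intros r Hr. destruct (Hprof r Hr). destruct (radpt_admissible n r ltac:(lia) Hr).
    repeat split; auto; [apply Hu; auto | rewrite Hradial by auto; rewrite HN; ring | apply HF, Hr]. }
  split; [|split].
  - exact (emden_fowler_derivatives a _ _ _ Hprof).
  - intro t. apply emden_fowler_equation; [lra | lra | apply Hradial, exp_pos].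
  - set (C := INR (S k) * 2 ^ (k + 3) / mu).
    assert (HC0 : 0 < C)
      by (apply Rdiv_lt_0_compat; [apply Rmult_lt_0_compat; [lra | apply pow_lt; lra] | lra]).
    exists (Rpower C (/ (p - 1))), ((a + INR (S k)) * Rpower C (/ (p - 1))).
    apply (emden_fowler_bounds p (INR (S k)) C); auto.
    intros r Hr. pose proof (decay_estimate k mu p _ _ _ F Hmu ltac:(lra) Hsuper r Hr) as Hdecay.
    repeat split.
    + apply (Hsuper r Hr).
    + exact (phi_deriv_nonpos k mu p _ _ _ F Hmu Hsuper r Hr).
    + exact (radial_lower_bound k mu p _ _ _ F Hmu Hsuper r Hr).
    + unfold C. apply Rmult_le_reg_l with mu; [lra|].
      replace (mu * (INR (S k) * 2 ^ (k + 3) / mu * profile u r))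
        with (INR (S k) * 2 ^ (k + 3) * profile u r) by (field; lra).
      lra.
Qed.

Lemma transformed_system n mu1 mu2 beta q u v : (3 <= n)%nat ->
  0 < mu1 -> 0 < mu2 -> 0 < beta -> 0 < q ->
  sol_S n mu1 mu2 beta q u v -> radial n u -> radial n v ->
  let p := 2 * q + 1 in
  let w1 := wbar n p u in
  let w2 := wbar n p v in
  exists dw1 ddw1 dw2 ddw2 : R -> R,
    (forall t, derivable_pt_lim w1 t (dw1 t) /\ derivable_pt_lim dw1 t (ddw1 t) /\
               derivable_pt_lim w2 t (dw2 t) /\ derivable_pt_lim dw2 t (ddw2 t)) /\
    (forall t,
       ddw1 t + tau0 n p * dw1 t - sigma0 n p * w1 t
         + mu1 * rpow (w1 t) (2 * q + 1) + beta * rpow (w1 t) q * rpow (w2 t) (q + 1) = 0 /\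
       ddw2 t + tau0 n p * dw2 t - sigma0 n p * w2 t
         + mu2 * rpow (w2 t) (2 * q + 1) + beta * rpow (w2 t) q * rpow (w1 t) (q + 1) = 0) /\
    (exists B D, forall t, 0 <= w1 t <= B /\ 0 <= w2 t <= B /\
                           Rabs (dw1 t) <= D /\ Rabs (dw2 t) <= D).
Proof.
  intros Hn Hmu1 Hmu2 Hb Hq [Hnn [D1u [D2u [D1v [D2v [HCu [HCv Heqs]]]]]]] Hru Hrv p w1 w2.
  assert (Hp : 1 < p) by (unfold p; lra).
  set (a := 2 / (p - 1)).
  set (Fu := fun r => mu1 * rpow (profile u r) p + beta * rpow (profile u r) q * rpow (profile v r) (q + 1)).
  set (Fv := fun r => mu2 * rpow (profile v r) p + beta * rpow (profile v r) q * rpow (profile u r) (q + 1)).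
  assert (Hcoupling : forall x y, 0 <= beta * rpow x q * rpow y (q + 1))
    by (intros; pose proof (rpow_ge0 x q); pose proof (rpow_ge0 y (q + 1)); apply Rmult_le_pos; nra).
  destruct (radial_component n mu1 p u D1u D2u Fu Hn Hp Hmu1 HCu Hru) as [Du [Ou [Bu [DBu HBu]]]].
  { intros x Hx Hx0. apply (Hnn x Hx Hx0). }
  { intros r Hr. destruct (radpt_admissible n r ltac:(lia) Hr) as [H1 H2].
    split; [apply (Heqs _ H1 H2) | unfold Fu, profile; pose proof (Hcoupling (u (radpt r)) (v (radpt r))); lra]. }
  destruct (radial_component n mu2 p v D1v D2v Fv Hn Hp Hmu2 HCv Hrv) as [Dv [Ov [Bv [DBv HBv]]]].
  { intros x Hx Hx0. apply (Hnn x Hx Hx0). }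
  { intros r Hr. destruct (radpt_admissible n r ltac:(lia) Hr) as [H1 H2].
    split; [apply (Heqs _ H1 H2) | unfold Fv, profile; pose proof (Hcoupling (v (radpt r)) (u (radpt r))); lra]. }
  assert (Hw1 : w1 = emden_fowler a (profile u)) by (apply wbar_emden_fowler; lia || lra).
  assert (Hw2 : w2 = emden_fowler a (profile v)) by (apply wbar_emden_fowler; lia || lra).
  exists (emden_fowler_d1 a (profile u) (profile (D1u 0%nat))),
    (emden_fowler_d2 a (profile u) (profile (D1u 0%nat)) (profile (D2u 0%nat 0%nat))),
    (emden_fowler_d1 a (profile v) (profile (D1v 0%nat))),
    (emden_fowler_d2 a (profile v) (profile (D1v 0%nat)) (profile (D2v 0%nat 0%nat))).
  rewrite Hw1, Hw2. split; [|split].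
  - intro t. destruct (Du t), (Dv t). auto.
  - intro t. specialize (Ou t). specialize (Ov t). unfold Fu, Fv, p in *.
    rewrite (coupling_scaling q mu1 beta t) in Ou by lra.
    rewrite (coupling_scaling q mu2 beta t) in Ov by lra.
    unfold emden_fowler, a in *. split; lra.
  - exists (Rmax Bu Bv), (Rmax DBu DBv). intro t. unfold a, p in *.
    destruct (HBu t) as [[Hu0 Hu1] Hu2]. destruct (HBv t) as [[Hv0 Hv1] Hv2].
    pose proof (Rmax_l Bu Bv). pose proof (Rmax_r Bu Bv).
    pose proof (Rmax_l DBu DBv). pose proof (Rmax_r DBu DBv).
    repeat split; lra.
Qed.

(* Energy identity: along any solution of the coupled system, Psi' = -tau0 (w1'^2 + w2'^2);
   the contributions of sigma0 and of the nonlinearity cancel exactly. *)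
Lemma energy_deriv n mu1 mu2 beta q (w1 w2 dw1 dw2 ddw1 ddw2 : R -> R) t : 0 < q ->
  let p := 2 * q + 1 in
  derivable_pt_lim w1 t (dw1 t) -> derivable_pt_lim dw1 t (ddw1 t) ->
  derivable_pt_lim w2 t (dw2 t) -> derivable_pt_lim dw2 t (ddw2 t) ->
  ddw1 t + tau0 n p * dw1 t - sigma0 n p * w1 t
    + mu1 * rpow (w1 t) (2 * q + 1) + beta * rpow (w1 t) q * rpow (w2 t) (q + 1) = 0 ->
  ddw2 t + tau0 n p * dw2 t - sigma0 n p * w2 t
    + mu2 * rpow (w2 t) (2 * q + 1) + beta * rpow (w2 t) q * rpow (w1 t) (q + 1) = 0 ->
  derivable_pt_lim (Psibar n mu1 mu2 beta q w1 w2 dw1 dw2) t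
    (- tau0 n p * (dw1 t ^ 2 + dw2 t ^ 2)).
Proof.
  intros Hq p Hw1 Hdw1 Hw2 Hdw2 Hode1 Hode2. unfold Psibar. cbv zeta.
  eapply derivable_pt_lim_eq.
  - apply derivable_pt_lim_plus; apply derivable_pt_lim_cmul.
    + apply derivable_pt_lim_minus; [|apply derivable_pt_lim_cmul];
        apply derivable_pt_lim_plus; apply derivable_pt_lim_sq; eassumption.
    + repeat apply derivable_pt_lim_plus;
        [apply derivable_pt_lim_cmul | apply derivable_pt_lim_mult; [apply derivable_pt_lim_cmul|] |
         apply derivable_pt_lim_cmul];
        apply derivable_pt_lim_rpow_comp; try eassumption; lra.
  - replace (2 * q + 1 + 1 - 1) with p by (unfold p; ring).
    replace (q + 1 - 1) with q by ring.
    replace (ddw1 t) with (- tau0 n p * dw1 t + sigma0 n p * w1 t - mu1 * rpow (w1 t) p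
                           - beta * rpow (w1 t) q * rpow (w2 t) (q + 1)) by (unfold p in *; lra).
    replace (ddw2 t) with (- tau0 n p * dw2 t + sigma0 n p * w2 t - mu2 * rpow (w2 t) p
                           - beta * rpow (w2 t) q * rpow (w1 t) (q + 1)) by (unfold p in *; lra).
    unfold p. field. lra.
Qed.

Lemma energy_bounded n mu1 mu2 beta q (w1 w2 dw1 dw2 : R -> R) B D :
  0 < mu1 -> 0 < mu2 -> 0 < beta -> 0 < q ->
  (forall t, 0 <= w1 t <= B /\ 0 <= w2 t <= B /\ Rabs (dw1 t) <= D /\ Rabs (dw2 t) <= D) ->
  exists M, forall t, Rabs (Psibar n mu1 mu2 beta q w1 w2 dw1 dw2 t) <= M.
Proof.
  intros Hmu1 Hmu2 Hb Hq Hbnd. set (p := 2 * q + 1). set (s := sigma0 n p).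
  set (MY := mu1 * rpow B (p + 1) + 2 * beta * rpow B (q + 1) * rpow B (q + 1)
             + mu2 * rpow B (p + 1)).
  exists (/ 2 * (2 * D ^ 2 + Rabs s * (2 * B ^ 2)) + / (p + 1) * MY). intro t.
  destruct (Hbnd t) as [[Hw1 Hw1B] [[Hw2 Hw2B] [Hd1 Hd2]]].
  assert (Hsq : forall x y, Rabs x <= y -> 0 <= x ^ 2 <= y ^ 2).
  { intros x y Hxy. split; [apply pow2_ge_0|]. rewrite <- (pow2_abs x).
    apply pow_incr. split; [apply Rabs_pos | exact Hxy]. }
  destruct (Hsq _ _ Hd1), (Hsq _ _ Hd2).
  destruct (Hsq (w1 t) B), (Hsq (w2 t) B); try (rewrite Rabs_right; lra).
  assert (HS : Rabs (s * (w1 t ^ 2 + w2 t ^ 2)) <= Rabs s * (2 * B ^ 2)).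
  { rewrite Rabs_mult, (Rabs_right (w1 t ^ 2 + w2 t ^ 2)) by lra.
    apply Rmult_le_compat_l; [apply Rabs_pos | lra]. }
  set (Y := mu1 * rpow (w1 t) (p + 1) + 2 * beta * rpow (w1 t) (q + 1) * rpow (w2 t) (q + 1)
            + mu2 * rpow (w2 t) (p + 1)).
  assert (HY : 0 <= Y <= MY).
  { assert (Hmono : forall x c, 0 < c -> 0 <= x <= B -> 0 <= rpow x c <= rpow B c)
      by (intros; split; [apply rpow_ge0 | apply rpow_le_compat; lra]).
    destruct (Hmono (w1 t) (p + 1)), (Hmono (w2 t) (p + 1)),
      (Hmono (w1 t) (q + 1)), (Hmono (w2 t) (q + 1)); try (unfold p; lra).
    assert (rpow (w1 t) (q + 1) * rpow (w2 t) (q + 1) <= rpow B (q + 1) * rpow B (q + 1))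
      by (apply Rmult_le_compat; lra).
    assert (0 <= rpow (w1 t) (q + 1) * rpow (w2 t) (q + 1)) by (apply Rmult_le_pos; lra).
    unfold Y, MY. split; nra. }
  change (Psibar n mu1 mu2 beta q w1 w2 dw1 dw2 t)
    with (/ 2 * (dw1 t ^ 2 + dw2 t ^ 2 - s * (w1 t ^ 2 + w2 t ^ 2)) + / (p + 1) * Y).
  assert (Hinv : 0 < / (p + 1)) by (apply Rinv_0_lt_compat; unfold p; lra).
  assert (/ (p + 1) * Y <= / (p + 1) * MY) by (apply Rmult_le_compat_l; lra).
  assert (0 <= / (p + 1) * Y) by (apply Rmult_le_pos; lra).
  pose proof (Rle_abs (s * (w1 t ^ 2 + w2 t ^ 2))).
  pose proof (Rle_abs (- (s * (w1 t ^ 2 + w2 t ^ 2)))). rewrite Rabs_Ropp in *.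
  apply Rabs_le. split; lra.
Qed.

(* tau0 = (p (n-2) - (n+2)) / (p-1) is negative for subcritical p. *)
Lemma tau0_neg n p : 2 < INR n -> 1 < p -> p < (INR n + 2) / (INR n - 2) -> tau0 n p < 0.
Proof.
  intros Hn Hp Hsub.
  assert (Hlt : p * (INR n - 2) < INR n + 2).
  { apply Rmult_lt_compat_r with (r := INR n - 2) in Hsub; [|lra].
    unfold Rdiv in Hsub. rewrite Rmult_assoc, Rinv_l, Rmult_1_r in Hsub by lra. exact Hsub. }
  replace (tau0 n p) with ((p * (INR n - 2) - (INR n + 2)) / (p - 1))
    by (unfold tau0, alpha0; field; lra).
  apply Rdiv_neg_pos; lra.
Qed.

Theorem lemma4p5 (n : nat) (mu1 mu2 beta q : R) (u v : pt -> R) :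
  (3 <= n)%nat ->
  0 < mu1 -> 0 < mu2 -> 0 < beta ->
  INR n / (INR n - 2) < 2 * q + 1 -> 2 * q + 1 < (INR n + 2) / (INR n - 2) ->
  sol_S n mu1 mu2 beta q u v -> radial n u -> radial n v ->
  let p := 2 * q + 1 in
  let w1 := wbar n p u in
  let w2 := wbar n p v in
  exists dw1 ddw1 dw2 ddw2 : R -> R,
    (forall t, derivable_pt_lim w1 t (dw1 t) /\ derivable_pt_lim dw1 t (ddw1 t) /\
               derivable_pt_lim w2 t (dw2 t) /\ derivable_pt_lim dw2 t (ddw2 t)) /\
    (forall t,
       ddw1 t + tau0 n p * dw1 t - sigma0 n p * w1 t
         + mu1 * rpow (w1 t) (2 * q + 1) + beta * rpow (w1 t) q * rpow (w2 t) (q + 1) = 0 /\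
       ddw2 t + tau0 n p * dw2 t - sigma0 n p * w2 t
         + mu2 * rpow (w2 t) (2 * q + 1) + beta * rpow (w2 t) q * rpow (w1 t) (q + 1) = 0) /\
    (forall s t, s <= t ->
       Psibar n mu1 mu2 beta q w1 w2 dw1 dw2 s <= Psibar n mu1 mu2 beta q w1 w2 dw1 dw2 t) /\
    (exists M, forall t, Rabs (Psibar n mu1 mu2 beta q w1 w2 dw1 dw2 t) <= M) /\
    (forall t, derivable_pt_lim (Psibar n mu1 mu2 beta q w1 w2 dw1 dw2) t
                 (- tau0 n p * (dw1 t ^ 2 + dw2 t ^ 2))).
Proof.
  intros Hn Hmu1 Hmu2 Hb Hsuper Hsub Hsol Hru Hrv p w1 w2.
  assert (HN : 3 <= INR n) by (replace 3 with (INR 3) by (simpl; ring); apply le_INR; lia).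
  assert (Hp : 1 < p).
  { assert (INR n / (INR n - 2) = 1 + 2 / (INR n - 2)) by (field; lra).
    assert (0 < 2 / (INR n - 2)) by (apply Rdiv_lt_0_compat; lra). unfold p; lra. }
  assert (Htau : tau0 n p < 0) by (apply tau0_neg; auto; lra).
  destruct (transformed_system n mu1 mu2 beta q u v) as
    [dw1 [ddw1 [dw2 [ddw2 [Hder [Hode [B [D Hbnd]]]]]]]]; auto; [unfold p in Hp; lra|].
  assert (Henergy : forall t, derivable_pt_lim (Psibar n mu1 mu2 beta q w1 w2 dw1 dw2) t
                                (- tau0 n p * (dw1 t ^ 2 + dw2 t ^ 2))).
  { intro t. destruct (Hder t) as [? [? [? ?]]]. destruct (Hode t).
    apply (energy_deriv n mu1 mu2 beta q w1 w2 dw1 dw2 ddw1 ddw2); auto. unfold p in Hp; lra. }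
  exists dw1, ddw1, dw2, ddw2.
  split; [exact Hder | split; [exact Hode | split; [| split; [| exact Henergy]]]].
  - intros s t Hst. apply (nondecreasing_of_deriv _ _ s t Hst (fun c _ => Henergy c)).
    intros c _. pose proof (pow2_ge_0 (dw1 c)). pose proof (pow2_ge_0 (dw2 c)).
    apply Rmult_le_pos; lra.
  - apply (energy_bounded n mu1 mu2 beta q w1 w2 dw1 dw2 B D); auto. unfold p in Hp; lra.
Qed.
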